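(* Let $\mathbb{K}$ be a field and $f=a_0(x)+a_1(x)y+\cdots+a_n(x)y^n\in\mathbb{K}[x,y]$ with $n\geq 2$, $a_0,\ldots,a_n\in\mathbb{K}[x]$, $a_0a_n\neq 0$. Assume that $f$ has no nonconstant factor in $\mathbb{K}[x]$. If there exists an index $j$ with $1\leq j\leq n-1$ such that $$\deg a_j>\max_{i<j}\{\deg a_i+(j-i)\deg a_n\}\quad\text{and}\quad \deg a_j>\max_{i>j}\{\deg a_i+(i-j)\deg a_0\},$$ then $f$ is a product of at most $\min\{j,n-j\}$ irreducible polynomials over $\mathbb{K}[x]$. In particular, if $j=1$ or $j=n-1$, then $f$ is irreducible over $\mathbb{K}[x]$.
   Context: Indices $i$ range over $\{0,1,\ldots,n\}$. $f$ is regarded as a polynomial in $y$ with coefficients in $\mathbb{K}[x]$; ''a product of at most $k$ irreducible polynomials over $\mathbb{K}[x]$'' means that in the factorization of $f$ into irreducible elements of $\mathbb{K}[x][y]$ the number of factors, counted with multiplicities, is at most $k$. *)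

From HB Require Import structures.
From mathcomp Require Import all_boot all_order all_algebra.
Set Implicit Arguments. Unset Strict Implicit. Unset Printing Implicit Defensive.
Import GRing.Theory.
Local Open Scope ring_scope.

Definition irreducible_elt (R : idomainType) (p : R) : Prop :=
  [/\ p != 0, p \isn't a GRing.unit &
      forall a b : R, p = a * b -> a \is a GRing.unit \/ b \is a GRing.unit].

Definition prod_at_most_irr (R : idomainType) (k : nat) (p : R) : Prop :=
  exists s : seq R, [/\ (size s <= k)%N, forall q, q \in s -> irreducible_elt q
                      & p = \prod_(q <- s) q].

(* degree of a nonzero polynomial (only used on nonzero polynomials) *)
Definition pdeg (R : nzRingType) (p : {poly R}) : nat := (size p).-1.

(* Give y the weight w := deg a_0 and let L(g) in K[y] be the leading coefficient
   in x of g(x, x^w y); L is multiplicative.  A factor g of f has g(x,0) | a_0, so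
   the weighted degree of its constant term is at most w, while its top term in y
   has weighted degree at least w: hence L(g) has no constant term or has positive
   degree, i.e. L(g) is not constant.  As a_j y^j strictly dominates the higher
   terms, L(f) has degree at most j in y, so f has at most j irreducible factors
   (all of positive degree in y, as f has no factor in K[x]).  The same argument
   applied to the reciprocal y^n f(x, 1/y) gives the bound n - j. *)

From HB Require Import structures.
From mathcomp Require Import all_boot all_order all_algebra.
From mathcomp Require Import zify.
From Stdlib Require Import Classical_Prop.
Import GRing.Theory.
Local Open Scope ring_scope.
Set Implicit Arguments. Unset Strict Implicit. Unset Printing Implicit Defensive.

Section WeightedLeadingForm.
Variables (K : fieldType) (w : nat).
Implicit Types g : {poly {poly K}}.

Definition wsubst g := g \Po ('X * ('X^w)%:P).

(* The terms of g of maximal weighted degree deg_x + w * deg_y, with x set to 1. *)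
Definition wlead g := lead_coef (swapXY (wsubst g)).

Lemma coef_wsubst g i : (wsubst g)`_i = g`_i * 'X^(i * w).
Proof.
have -> : wsubst g = \poly_(i < size g) (g`_i * 'X^(i * w)).
  rewrite /wsubst comp_polyE poly_def; apply: eq_bigr => k _.
  by rewrite exprMn -rmorphXn /= -exprM mulnC mulrC mul_polyC scalerA.
by rewrite coef_poly; case: ltnP => // le_g_i; rewrite nth_default ?mul0r.
Qed.

Lemma size_coef_wsubst g i :
  g`_i != 0 -> size (wsubst g)`_i = (i * w + size (g`_i)%R)%N.
Proof. by move=> gi_neq0; rewrite coef_wsubst size_mulXn. Qed.

Lemma wleadM g h : wlead (g * h) = wlead g * wlead h.
Proof. by rewrite /wlead /wsubst comp_polyM rmorphM lead_coefM. Qed.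

Lemma wlead1 : wlead 1 = 1.
Proof. by rewrite /wlead /wsubst comp_polyC rmorph1 lead_coef1. Qed.

Lemma wlead_prod (s : seq {poly {poly K}}) :
  wlead (\prod_(g <- s) g) = \prod_(g <- s) wlead g.
Proof. exact: (big_morph wlead wleadM wlead1). Qed.

Lemma coef_wlead g i : (wlead g)`_i = (wsubst g)`_i`_(sizeY (wsubst g)).-1.
Proof. by rewrite /wlead lead_coefE coef_swapXY sizeYE. Qed.

Lemma coef_wlead_eq0 g i : g`_i != 0 ->
  ((wlead g)`_i == 0) = (size ((wsubst g)`_i)%R < sizeY (wsubst g))%N.
Proof.
move=> gi_neq0; rewrite coef_wlead.
have vi_neq0 : (wsubst g)`_i != 0 by rewrite coef_wsubst mulf_neq0 ?expf_neq0 ?polyX_eq0.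
have := max_size_coefXY (wsubst g) i; rewrite leq_eqVlt => /orP[/eqP <- | lt_v].
  by rewrite -lead_coefE lead_coef_eq0 (negPf vi_neq0) ltnn.
by rewrite lt_v nth_default ?eqxx // -ltnS (ltn_predK lt_v).
Qed.

Lemma size_wlead_gt1 g :
  (1 < size g)%N -> g`_0 != 0 -> (size (g`_0)%R <= w.+1)%N -> (1 < size (wlead g))%N.
Proof.
move=> g_gt1 g0_neq0 g0_le.
set v := wsubst g; set m := (size g).-1.
have m_gt0 : (0 < m)%N by rewrite /m -subn1 subn_gt0.
have gm_neq0 : g`_m != 0 by rewrite -lead_coefE lead_coef_eq0 -size_poly_gt0 ltnW.
have v0 : size v`_0 = size g`_0 by rewrite size_coef_wsubst.
have vm : (w.+1 <= size (v`_m)%R)%N.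
  by rewrite size_coef_wsubst // -addn1 leq_add ?leq_pmull // size_poly_gt0.
have [lt_v0|ge_v0] := ltnP (size v`_0) (sizeY v).
  have wlead_neq0 : wlead g != 0.
    by rewrite lead_coef_eq0 -size_poly_gt0 -sizeYE (leq_ltn_trans _ lt_v0).
  rewrite ltnNge; apply: contra wlead_neq0 => /size1_polyC ->.
  by move: lt_v0; rewrite -coef_wlead_eq0 // => /eqP ->.
have vm_max : size v`_m = sizeY v.
  by apply/eqP; rewrite eqn_leq max_size_coefXY (leq_trans ge_v0) // (leq_trans _ vm) // v0.
have : (wlead g)`_m != 0 by rewrite coef_wlead_eq0 // -/v vm_max ltnn.
by apply: contraNT; rewrite -leqNgt => le; rewrite nth_default // (leq_trans le).
Qed.

Lemma size_wlead_le g j : g`_j != 0 ->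
  (forall i, (j < i)%N -> g`_i != 0 -> (i * w + size (g`_i)%R < j * w + size (g`_j)%R)%N) ->
  (size (wlead g) <= j.+1)%N.
Proof.
move=> gj_neq0 dom; apply/leq_sizeP => i lt_ji.
have [gi_eq0|gi_neq0] := eqVneq g`_i 0.
  by rewrite coef_wlead coef_wsubst gi_eq0 mul0r coef0.
apply/eqP; rewrite coef_wlead_eq0 // size_coef_wsubst //.
by rewrite (leq_trans (dom i lt_ji gi_neq0)) // -size_coef_wsubst // max_size_coefXY.
Qed.

End WeightedLeadingForm.

Section Reversal.
Variable R : comNzRingType.
Implicit Types p q : {poly R}.

Definition revp (N : nat) p := \poly_(i < N.+1) p`_(N - i).

Lemma coef_revp N p i : (revp N p)`_i = if (i <= N)%N then p`_(N - i) else 0.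
Proof. by rewrite coef_poly ltnS. Qed.

Fact revp_is_semilinear N : semilinear (revp N).
Proof.
by split=> [a p|p q]; apply/polyP => i;
  rewrite !(coef_revp, coefD, coefZ); case: leqP; rewrite ?mulr0 ?addr0.
Qed.

HB.instance Definition _ N :=
  GRing.isSemilinear.Build R {poly R} {poly R} _ (revp N) (revp_is_semilinear N).

Lemma revpXn N i : (i <= N)%N -> revp N 'X^i = 'X^(N - i).
Proof.
move=> le_iN; apply/polyP => k; rewrite coef_revp !coefXn.
case: leqP => [le_kN | lt_Nk].
  by have -> : (N - k == i)%N = (k == N - i)%N by apply/eqP/eqP; lia.
by have -> : (k == N - i)%N = false by apply/eqP; lia.
Qed.

Lemma revpM N M p q : (size p <= N.+1)%N -> (size q <= M.+1)%N ->
  revp (N + M) (p * q) = revp N p * revp M q.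
Proof.
move=> szp szq.
rewrite -[p](take_poly_id szp) -[q](take_poly_id szq) /take_poly !poly_def.
rewrite [in LHS]big_distrlr !linear_sum big_distrlr /=; apply: eq_bigr => i _.
rewrite linear_sum; apply: eq_bigr => k _ /=.
have lt_iN := ltn_ord i; have lt_kM := ltn_ord k.
rewrite -scalerAl -scalerAr scalerA -exprD !linearZ /= !revpXn; [|lia..].
by rewrite -scalerAl -scalerAr scalerA -exprD; congr (_ *: 'X^_); lia.
Qed.

End Reversal.

Section Reciprocal.
Variable R : idomainType.
Implicit Types p q : {poly R}.

Definition reciprocal p := revp (size p).-1 p.

Lemma reciprocal1 : reciprocal 1 = 1.
Proof. by apply/polyP => -[|i]; rewrite coef_revp size_poly1 // coef1. Qed.

Lemma size_reciprocal p : p`_0 != 0 -> size (reciprocal p) = size p.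
Proof.
move=> p0_neq0; have p_neq0 : p != 0 by apply: contraNneq p0_neq0 => ->; rewrite coef0.
by rewrite size_poly_eq /= ?subnn // prednK // size_poly_gt0.
Qed.

Lemma reciprocalM p q : reciprocal (p * q) = reciprocal p * reciprocal q.
Proof.
have [->|p_neq0] := eqVneq p 0; first by rewrite mul0r /reciprocal !linear0 mul0r.
have [->|q_neq0] := eqVneq q 0; first by rewrite mulr0 /reciprocal !linear0 mulr0.
rewrite /reciprocal -revpM ?leqSpred // size_mul //.
by congr revp; move: p_neq0 q_neq0; rewrite -!size_poly_gt0; lia.
Qed.

Lemma reciprocal_prod (s : seq {poly R}) :
  reciprocal (\prod_(p <- s) p) = \prod_(p <- s) reciprocal p.
Proof. exact: (big_morph reciprocal reciprocalM reciprocal1). Qed.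

End Reciprocal.

Lemma size_prod_nonconst_gt (R : idomainType) (I : eqType) (s : seq I)
    (F : I -> {poly R}) :
  (forall i, i \in s -> (1 < size (F i))%N) -> (size s < size (\prod_(i <- s) F i)%R)%N.
Proof.
elim: s => [|i s IH] F_gt1; first by rewrite big_nil size_poly1.
have Fi_gt1 := F_gt1 i (mem_head i s).
have := IH (fun k ks => F_gt1 k (@mem_behead _ (i :: s) k ks)).
rewrite big_cons; set P := \prod_(k <- s) F k => P_gt.
by rewrite /= size_mul -?size_poly_gt0; lia.
Qed.

Section Factorization.
Variable R : idomainType.
Implicit Types f g h : {poly R}.

Definition primitive_poly f := forall c g, f = c%:P * g -> c \is a GRing.unit.

Lemma primitive_dvd_size_gt1 f g h :
  primitive_poly f -> f = g * h -> g \isn't a GRing.unit -> (1 < size g)%N.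
Proof.
move=> f_prim fgh; apply: contraR; rewrite -leqNgt => /size1_polyC g_const.
by rewrite g_const; apply: rmorph_unit; apply: (f_prim _ h); rewrite -g_const.
Qed.

Lemma reducible_elt_split (S : idomainType) (g : S) :
  g != 0 -> g \isn't a GRing.unit -> ~ irreducible_elt g ->
  exists a b, [/\ g = a * b, a \isn't a GRing.unit & b \isn't a GRing.unit].
Proof.
move=> g_neq0 gNU g_red; apply: NNPP => no_split; apply: g_red; split=> // a b gab.
apply: NNPP => aNU_bNU; apply: no_split; exists a, b.
by split=> //; apply/negP => ?; apply: aNU_bNU; [left | right].
Qed.

Lemma primitive_factorization f :
  primitive_poly f -> f \isn't a GRing.unit ->
  exists2 s, (forall q, q \in s -> irreducible_elt q) & f = \prod_(q <- s) q.
Proof.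
move=> f_prim; suff dvd_fact g h : f = g * h -> g \isn't a GRing.unit ->
    exists2 s, (forall q, q \in s -> irreducible_elt q) & g = \prod_(q <- s) q.
  by apply: (dvd_fact f 1); rewrite mulr1.
have [N] := ubnP (size g); elim: N g h => // N IH g h lt_gN fgh gNU.
have g_gt1 := primitive_dvd_size_gt1 f_prim fgh gNU.
have [g_irr|g_red] := classic (irreducible_elt g).
  by exists [:: g]; [move=> q; rewrite inE => /eqP -> | rewrite big_seq1].
have g_neq0 : g != 0 by rewrite -size_poly_gt0 ltnW.
have [a [b [gab aNU bNU]]] := reducible_elt_split g_neq0 gNU g_red.
have fa : f = a * (b * h) by rewrite fgh gab mulrA.
have fb : f = b * (a * h) by rewrite fgh gab mulrCA mulrA.
have a_gt1 := primitive_dvd_size_gt1 f_prim fa aNU.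
have b_gt1 := primitive_dvd_size_gt1 f_prim fb bNU.
have sz_g : size g = (size a + size b).-1 by rewrite gab size_mul // -size_poly_gt0 ltnW.
have lt_aN : (size a < N)%N by lia.
have lt_bN : (size b < N)%N by lia.
have [sa sa_irr a_prod] := IH a _ lt_aN fa aNU.
have [sb sb_irr b_prod] := IH b _ lt_bN fb bNU.
exists (sa ++ sb); last by rewrite gab a_prod b_prod big_cat.
by move=> q; rewrite mem_cat => /orP[]; [apply: sa_irr | apply: sb_irr].
Qed.

End Factorization.

Section FactorCount.
Variable K : fieldType.
Implicit Types (f g : {poly {poly K}}) (s : seq {poly {poly K}}).

Lemma factor_coef0_dvd f s g :
  f = \prod_(h <- s) h -> g \in s -> g`_0 %| f`_0.
Proof. by move=> fs gs; rewrite fs (big_rem _ gs) coef0M dvdp_mulIl. Qed.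

Lemma count_factors_le f s j :
  f = \prod_(g <- s) g -> (forall g, g \in s -> (1 < size g)%N) ->
  f`_0 != 0 -> f`_j != 0 ->
  (forall i, (j < i)%N -> f`_i != 0 ->
     (pdeg f`_i + (i - j) * pdeg f`_0 < pdeg f`_j)%N) ->
  (size s <= j)%N.
Proof.
move=> fs s_gt1 f0_neq0 fj_neq0 dom; set w := pdeg f`_0 in dom *.
have lt_s : (size s < size (wlead w f))%N.
  rewrite fs wlead_prod; apply: size_prod_nonconst_gt => g gs.
  have g0_dvd := factor_coef0_dvd fs gs.
  apply: size_wlead_gt1 (s_gt1 g gs) _ _.
    by move: g0_dvd; apply: contraTneq => ->; rewrite dvd0p.
  by rewrite /w /pdeg prednK ?size_poly_gt0 // dvdp_leq.
have le_j : (size (wlead w f) <= j.+1)%N.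
  apply: size_wlead_le => [// | i lt_ji fi_neq0].
  have := dom i lt_ji fi_neq0; rewrite /pdeg mulnBl.
  have : (j * w <= i * w)%N by rewrite leq_mul2r ltnW ?orbT.
  move: fi_neq0 fj_neq0; rewrite -!size_poly_gt0.
  move: (size f`_i) (size f`_j) (i * w)%N (j * w)%N; lia.
by rewrite -ltnS (leq_trans lt_s).
Qed.

Lemma count_factors_le_rev f s n j :
  f = \prod_(g <- s) g -> (forall g, g \in s -> (1 < size g)%N) ->
  size f = n.+1 -> f`_0 != 0 -> (j < n)%N -> f`_j != 0 ->
  (forall i, (i < j)%N -> f`_i != 0 ->
     (pdeg f`_i + (j - i) * pdeg f`_n < pdeg f`_j)%N) ->
  (size s <= n - j)%N.
Proof.
move=> fs s_gt1 szf f0_neq0 lt_jn fj_neq0 dom.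
have rfs : reciprocal f = \prod_(g <- map (@reciprocal _) s) g.
  by rewrite big_map -reciprocal_prod -fs.
have coef_rf i : (reciprocal f)`_i = if (i <= n)%N then f`_(n - i) else 0.
  by rewrite coef_revp szf.
rewrite -(size_map (@reciprocal _)); apply: count_factors_le rfs _ _ _ _.
- move=> _ /mapP[g gs ->].
  have g0_neq0 : g`_0 != 0.
    by move: (factor_coef0_dvd fs gs); apply: contraTneq => ->; rewrite dvd0p.
  by rewrite size_reciprocal // s_gt1.
- have fn_neq0 : f`_n != 0.
    by rewrite -[n]/(n.+1.-1) -szf -lead_coefE lead_coef_eq0 -size_poly_gt0 szf.
  by rewrite coef_rf leq0n subn0.
- by rewrite coef_rf leq_subr subKn // ltnW.
- move=> i lt_i; rewrite !coef_rf leq0n subn0 leq_subr subKn ?(ltnW lt_jn) //.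
  case: (leqP i n) => [le_in fi_neq0 | _]; last by rewrite eqxx.
  have := dom (n - i)%N _ fi_neq0.
  by rewrite (_ : j - (n - i) = i - (n - j))%N; lia.
Qed.

End FactorCount.

Theorem theorem8 (K : fieldType) (n : nat) (f : {poly {poly K}}) (j : nat) :
  (2 <= n)%N ->
  size f = n.+1 ->
  f`_0 != 0 ->
  f`_n != 0 ->
  (forall (c : {poly K}) (g : {poly {poly K}}), f = c%:P * g -> (size c <= 1)%N) ->
  (1 <= j)%N -> (j <= n - 1)%N ->
  (forall i : nat, (i < j)%N -> f`_i != 0 ->
     (pdeg (f`_i)%R + (j - i) * pdeg (f`_n)%R < pdeg (f`_j)%R)%N) ->
  (forall i : nat, (j < i)%N -> (i <= n)%N -> f`_i != 0 ->
     (pdeg (f`_i)%R + (i - j) * pdeg (f`_0)%R < pdeg (f`_j)%R)%N) ->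
  prod_at_most_irr (minn j (n - j)) f /\
  ((j = 1 \/ j = n - 1)%N -> irreducible_elt f).
Proof.
move=> n_ge2 szf f0_neq0 fn_neq0 const_factor j_ge1 j_le dom_low dom_high.
have f_prim : primitive_poly f.
  move=> c g fcg; have c_const := size1_polyC (const_factor c g fcg).
  have c_neq0 : c != 0 by apply/eqP => c_eq0; move: szf; rewrite fcg c_eq0 mul0r size_poly0.
  rewrite c_const; apply: rmorph_unit; rewrite unitfE.
  by apply: contraNneq c_neq0 => c0_eq0; rewrite c_const c0_eq0.
have fNU : f \isn't a GRing.unit by rewrite poly_unitE szf eqSS gtn_eqF // ltnW.
have [s s_irr fs] := primitive_factorization f_prim fNU.
have s_gt1 g : g \in s -> (1 < size g)%N.
  move=> gs; have [_ gNU _] := s_irr g gs.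
  by apply: primitive_dvd_size_gt1 f_prim _ gNU; rewrite fs (big_rem _ gs).
have lt_jn : (j < n)%N by lia.
have fj_neq0 : f`_j != 0.
  by apply: contraTneq (dom_high n lt_jn (leqnn n) fn_neq0) => ->; rewrite /pdeg size_poly0.
have le_j : (size s <= j)%N.
  apply: count_factors_le fs s_gt1 f0_neq0 fj_neq0 _ => i lt_ji fi_neq0.
  apply: dom_high => //; rewrite -ltnS -szf; apply: contraNT fi_neq0.
  by rewrite -leqNgt => le_fi; rewrite nth_default.
have le_nj : (size s <= n - j)%N.
  exact: count_factors_le_rev fs s_gt1 szf f0_neq0 lt_jn fj_neq0 dom_low.
split; first by exists s; rewrite // leq_min le_j le_nj.
move=> j_extreme; have : (size s <= 1)%N by case: j_extreme => j_eq; lia.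
case: s s_irr fs {s_gt1 le_j le_nj} => [|q [|]] // s_irr fs _.
  by move: fNU; rewrite fs big_nil unitr1.
by rewrite fs big_seq1; apply: s_irr; rewrite mem_head.
Qed.
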